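(* Let $m, n_0, n_1$ be positive integers and $n(\lambda) = n_0 + n_1\lambda$. Let $x_0, y_0, z_0$ be positive rational numbers with $m/n_0 = 1/x_0 + 1/y_0 + 1/z_0$. Consider polynomials $x(\lambda), y(\lambda), z(\lambda)$ with rational coefficients and constant terms $x(0) = x_0$, $y(0) = y_0$, $z(0) = z_0$, such that $x$ and $z$ have degree $1$, $y$ has degree $2$, and $$\frac{m}{n(\lambda)} = \frac{1}{x(\lambda)} + \frac{1}{y(\lambda)} + \frac{1}{z(\lambda)}$$ holds identically in $\lambda$. Up to interchanging the roles of $x$ and $z$, there are exactly two such solutions, namely $$z_+(\lambda) = z_0 + \frac{n_1}{n_0}\frac{y_0 z_0}{y_0 + z_0}\lambda,\quad x_+(\lambda) = x_0 + x_0\frac{n_1}{n_0}\lambda,\quad y_+(\lambda) = y_0 + y_0\frac{n_1}{n_0}\Big(1 + \frac{y_0}{y_0+z_0}\Big)\lambda + \Big(y_0\frac{n_1}{n_0}\Big)^2\frac{1}{y_0+z_0}\lambda^2,$$ and $$z_-(\lambda) = z_0 + \frac{n_1}{m}\frac{x_0+z_0}{x_0}\lambda,\quad x_-(\lambda) = x_0 + \frac{n_1}{m}\frac{x_0+z_0}{z_0}\lambda,\quad y_-(\lambda) = y_0 + \Big(\frac{2 y_0 n_1}{n_0} - \frac{n_1}{m}\Big)\lambda + \frac{n_1}{n_0}\Big(\frac{y_0 n_1}{n_0} - \frac{n_1}{m}\Big)\lambda^2 .$$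
   Context: $\lambda$ is an indeterminate; the equation is an identity of rational functions in $\lambda$. *)

From HB Require Import structures.
From mathcomp Require Import all_boot all_order all_algebra.
From mathcomp Require Export fraction.
Set Implicit Arguments. Unset Strict Implicit. Unset Printing Implicit Defensive.
Import Order.TTheory GRing.Theory Num.Theory.
Local Open Scope ring_scope.

(* The rational function field Q(lambda); lambda is the polynomial variable 'X. *)
Notation ratfun := {fraction {poly rat}}.
Notation "x %:F" := (@FracField.tofrac _ x).

Definition npoly (n0 n1 : nat) : {poly rat} := (n0%:R)%:P + (n1%:R)%:P * 'X.

Definition is_solution (m n0 n1 : nat) (x0 y0 z0 : rat) (x y z : {poly rat}) : Prop :=
  [/\ size x = 2%N, size y = 3%N & size z = 2%N] /\
  [/\ x.[0] = x0, y.[0] = y0 & z.[0] = z0] /\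
  (m%:R : ratfun) / (npoly n0 n1)%:F = (x%:F)^-1 + (y%:F)^-1 + (z%:F)^-1.

Definition zplus (n0 n1 : nat) (y0 z0 : rat) : {poly rat} :=
  z0%:P + (n1%:R / n0%:R * (y0 * z0 / (y0 + z0)))%:P * 'X.
Definition xplus (n0 n1 : nat) (x0 : rat) : {poly rat} :=
  x0%:P + (x0 * (n1%:R / n0%:R))%:P * 'X.
Definition yplus (n0 n1 : nat) (y0 z0 : rat) : {poly rat} :=
  y0%:P + (y0 * (n1%:R / n0%:R) * (1 + y0 / (y0 + z0)))%:P * 'X
  + ((y0 * (n1%:R / n0%:R)) ^+ 2 / (y0 + z0))%:P * 'X ^+ 2.

Definition zminus (m n1 : nat) (x0 z0 : rat) : {poly rat} :=
  z0%:P + (n1%:R / m%:R * ((x0 + z0) / x0))%:P * 'X.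
Definition xminus (m n1 : nat) (x0 z0 : rat) : {poly rat} :=
  x0%:P + (n1%:R / m%:R * ((x0 + z0) / z0))%:P * 'X.
Definition yminus (m n0 n1 : nat) (y0 : rat) : {poly rat} :=
  y0%:P + (2 * y0 * n1%:R / n0%:R - n1%:R / m%:R)%:P * 'X
  + (n1%:R / n0%:R * (y0 * n1%:R / n0%:R - n1%:R / m%:R))%:P * 'X ^+ 2.

From Pilot Require Import Defs.
From HB Require Import structures.
From mathcomp Require Import all_boot all_order all_algebra ring.
Set Implicit Arguments. Unset Strict Implicit. Unset Printing Implicit Defensive.
Import Order.TTheory GRing.Theory Num.Theory.
Local Open Scope ring_scope.

(* Clearing denominators turns m/n = 1/x + 1/y + 1/z into y D = n x z with
   D = m x z - n (x + z).  Comparing top coefficients, D is linear; its root r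
   is then a root of n x z, and since D(r) = m x(r) z(r) - n(r) (x(r) + z(r))
   vanishes too, two of the linear polynomials n, x, z vanish at r, i.e. are
   proportional.  The pairs (n, x) and (n, z) give the "+" solution and its
   mirror image, the pair (x, z) the "-" solution: in each case the vanishing
   quadratic coefficient of D fixes the remaining slope, and y is read off
   from y D = n x z. *)

Definition lin (R : nzRingType) (p0 p1 : R) : {poly R} := p0%:P + p1%:P * 'X.
Definition quad (R : nzRingType) (p0 p1 p2 : R) : {poly R} :=
  lin p0 p1 + p2%:P * 'X ^+ 2.

Section LinQuad.
Variable R : nzRingType.
Implicit Type p : {poly R}.

Lemma lin_coef (p0 p1 : R) i : (lin p0 p1)`_i = [:: p0; p1]`_i.
Proof.
rewrite coefD coefC coefCM coefX.
by case: i => [|[|i]]; rewrite /= ?(mulr0, mulr1, addr0, add0r, nth_nil).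
Qed.

Lemma quad_coef (p0 p1 p2 : R) i : (quad p0 p1 p2)`_i = [:: p0; p1; p2]`_i.
Proof.
rewrite coefD lin_coef coefCM coefXn.
by case: i => [|[|[|i]]]; rewrite /= ?(mulr0, mulr1, addr0, add0r, nth_nil).
Qed.

Lemma horner_lin0 (p0 p1 : R) : (lin p0 p1).[0] = p0.
Proof. by rewrite horner_coef0 lin_coef. Qed.

Lemma horner_quad0 (p0 p1 p2 : R) : (quad p0 p1 p2).[0] = p0.
Proof. by rewrite horner_coef0 quad_coef. Qed.

Lemma size_lin (p0 p1 : R) : p1 != 0 -> size (lin p0 p1) = 2%N.
Proof.
move=> p1_neq0.
by rewrite /lin addrC size_MXaddC polyC_eq0 (negbTE p1_neq0) size_polyC p1_neq0.
Qed.

Lemma size_quad (p0 p1 p2 : R) : p2 != 0 -> size (quad p0 p1 p2) = 3%N.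
Proof.
move=> p2_neq0; apply/eqP; rewrite eqn_leq; apply/andP; split.
  by apply/leq_sizeP => -[|[|[|i]]] //= _; rewrite quad_coef /= nth_nil.
rewrite ltnNge; apply: contra p2_neq0 => /leq_sizeP/(_ 2%N (leqnn _)).
by rewrite quad_coef /= => ->.
Qed.

Lemma size2_lin p : size p = 2%N -> exists2 a, a != 0 & p = lin p.[0] a.
Proof.
move=> sp; exists p`_1.
  by have := lead_coef_eq0 p; rewrite lead_coefE sp -size_poly_eq0 sp => ->.
apply/polyP => -[|[|i]]; rewrite lin_coef ?horner_coef0 //=.
by rewrite nth_nil nth_default // sp.
Qed.

Lemma size3_quad p : size p = 3%N -> exists b, exists2 d, d != 0 & p = quad p.[0] b d.
Proof.
move=> sp; exists p`_1, p`_2.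
  by have := lead_coef_eq0 p; rewrite lead_coefE sp -size_poly_eq0 sp => ->.
apply/polyP => -[|[|[|i]]]; rewrite quad_coef ?horner_coef0 //=.
by rewrite nth_nil nth_default // sp.
Qed.

End LinQuad.

Lemma quartic_eq0 (R : nzRingType) (c0 c1 c2 c3 c4 : R) :
  quad c0 c1 c2 + c3%:P * 'X ^+ 3 + c4%:P * 'X ^+ 4 = 0 <->
  [/\ c0 = 0, c1 = 0, c2 = 0, c3 = 0 & c4 = 0].
Proof.
split=> [E | [-> -> -> -> ->]]; last by rewrite /quad /lin !mul0r !addr0.
have coefE i : (quad c0 c1 c2 + c3%:P * 'X ^+ 3 + c4%:P * 'X ^+ 4)`_i
    = [:: c0; c1; c2; c3; c4]`_i.
  rewrite !coefD coefC !coefCM coefX !coefXn.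
  by case: i => [|[|[|[|[|i]]]]]; rewrite /= ?(mulr0, mulr1, addr0, add0r, nth_nil).
rewrite E in coefE.
by split; [move: (coefE 0%N) | move: (coefE 1%N) | move: (coefE 2%N)
  | move: (coefE 3%N) | move: (coefE 4%N)]; rewrite coef0.
Qed.

Lemma div_eq_sum_inv3 (F : fieldType) (M N x y z : F) :
  N != 0 -> x != 0 -> y != 0 -> z != 0 ->
  M / N = x^-1 + y^-1 + z^-1 <-> y * (M * x * z - N * (x + z)) = N * x * z.
Proof.
move=> N_neq0 x_neq0 y_neq0 z_neq0; split=> E.
  by rewrite [M](canRL (divfK N_neq0) E); field; rewrite x_neq0 y_neq0 z_neq0.
have D_neq0 : M * x * z - N * (x + z) != 0.
  apply: contraNneq (mulf_neq0 (mulf_neq0 N_neq0 x_neq0) z_neq0) => D0.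
  by rewrite -E D0 mulr0.
rewrite [y](canRL (mulfK D_neq0) E); field.
by rewrite N_neq0 x_neq0 z_neq0 D_neq0.
Qed.

Lemma tofrac_div_eq_sum_inv3 (R : idomainType) (M N x y z : R) :
  N != 0 -> x != 0 -> y != 0 -> z != 0 ->
  (M%:F / N%:F : {fraction R}) = (x%:F)^-1 + (y%:F)^-1 + (z%:F)^-1 <->
  y * (M * x * z - N * (x + z)) = N * x * z.
Proof.
move=> N_neq0 x_neq0 y_neq0 z_neq0; rewrite div_eq_sum_inv3 ?tofrac_eq0 //.
rewrite -!tofracM -tofracD -tofracM -tofracB -tofracM.
by split=> [/eqP | -> //]; rewrite tofrac_eq => /eqP.
Qed.

Definition cleared_eq (R : comNzRingType) (M : R) (N x y z : {poly R}) : Prop :=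
  y * (M%:P * x * z - N * (x + z)) = N * x * z.

Section CoefficientEquations.
Variables (R : comNzRingType) (M A B x0 y0 z0 a b c d : R).

(* The coefficients of D = M x z - N (x + z) for N = A + B X, x = x0 + a X and
   z = z0 + c X. *)
Definition den0 := M * x0 * z0 - A * (x0 + z0).
Definition den1 := M * (x0 * c + a * z0) - A * (a + c) - B * (x0 + z0).
Definition den2 := M * a * c - B * (a + c).

Definition coef_eqs : Prop := [/\
  y0 * den0 = A * x0 * z0,
  y0 * den1 + b * den0 = A * (x0 * c + a * z0) + B * x0 * z0,
  y0 * den2 + b * den1 + d * den0 = A * a * c + B * (x0 * c + a * z0),
  b * den2 + d * den1 = B * a * c &
  d * den2 = 0].

Lemma cleared_eq_coefP :
  cleared_eq M (lin A B) (lin x0 a) (quad y0 b d) (lin z0 c) <-> coef_eqs.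
Proof.
have expand : quad y0 b d * (M%:P * lin x0 a * lin z0 c - lin A B * (lin x0 a + lin z0 c))
    - lin A B * lin x0 a * lin z0 c
  = quad (y0 * den0 - A * x0 * z0)
         (y0 * den1 + b * den0 - (A * (x0 * c + a * z0) + B * x0 * z0))
         (y0 * den2 + b * den1 + d * den0 - (A * a * c + B * (x0 * c + a * z0)))
    + (b * den2 + d * den1 - B * a * c)%:P * 'X ^+ 3 + (d * den2)%:P * 'X ^+ 4.
  by rewrite /quad /lin /den0 /den1 /den2; ring.
split=> [E | [E0 E1 E2 E3 E4]].
  move: expand; rewrite E subrr => /esym/quartic_eq0[].
  by move=> /subr0_eq ? /subr0_eq ? /subr0_eq ? /subr0_eq ? ?.
by apply/subr0_eq; rewrite expand; apply/quartic_eq0; rewrite E0 E1 E2 E3 E4 !subrr.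
Qed.

End CoefficientEquations.

Lemma two_of_three_eq0 (R : idomainType) (M n u w : R) :
  M != 0 -> M * u * w = n * (u + w) -> n * u * w = 0 ->
  [\/ n = 0 /\ u = 0, n = 0 /\ w = 0 | u = 0 /\ w = 0].
Proof.
move=> M_neq0 E /eqP; rewrite !mulf_eq0 -orbA => /or3P[] /eqP h.
- move: E; rewrite h mul0r => /eqP; rewrite !mulf_eq0 (negbTE M_neq0) /=.
  by case/orP=> /eqP h'; [apply: Or31 | apply: Or32].
- move: E; rewrite h mulr0 mul0r add0r => /esym/eqP; rewrite mulf_eq0.
  by case/orP=> /eqP h'; [apply: Or31 | apply: Or33].
- move: E; rewrite h mulr0 addr0 => /esym/eqP; rewrite mulf_eq0.
  by case/orP=> /eqP h'; [apply: Or32 | apply: Or33].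
Qed.

Lemma common_root_cross (R : comNzRingType) (p0 p1 q0 q1 r : R) :
  p0 + p1 * r = 0 -> q0 + q1 * r = 0 -> p0 * q1 = p1 * q0.
Proof.
move=> p_r q_r; apply/subr0_eq.
have -> : p0 * q1 - p1 * q0 = (p0 + p1 * r) * q1 - p1 * (q0 + q1 * r) by ring.
by rewrite p_r q_r mul0r mulr0 subrr.
Qed.

Section LinearDenominator.
Variables (F : fieldType) (M A B x0 y0 z0 : F).
Hypotheses (M_neq0 : M != 0) (B_neq0 : B != 0).

Lemma den_linear (a b c d : F) : a != 0 -> c != 0 -> d != 0 ->
  coef_eqs M A B x0 y0 z0 a b c d ->
  [/\ den2 M B a c = 0, den1 M A B x0 z0 a c != 0 &
      d * den1 M A B x0 z0 a c = B * a * c].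
Proof.
move=> a_neq0 c_neq0 d_neq0 [_ _ _ E3 /eqP E4].
have den2_0 : den2 M B a c = 0 by apply/eqP; move: E4; rewrite mulf_eq0 (negbTE d_neq0).
have E3' : d * den1 M A B x0 z0 a c = B * a * c by rewrite -E3 den2_0 mulr0 add0r.
split=> //; apply: contraNneq (mulf_neq0 (mulf_neq0 B_neq0 a_neq0) c_neq0) => den1_0.
by rewrite -E3' den1_0 mulr0.
Qed.

Lemma shared_root (a b c d : F) : a != 0 -> c != 0 -> d != 0 ->
  coef_eqs M A B x0 y0 z0 a b c d ->
  [\/ A * a = B * x0, A * c = B * z0 | x0 * c = a * z0].
Proof.
move=> a_neq0 c_neq0 d_neq0 eqs.
have [den2_0 den1_neq0 _] := den_linear a_neq0 c_neq0 d_neq0 eqs.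
have /cleared_eq_coefP E := eqs.
have [r den_r] : exists r, den0 M A x0 z0 + den1 M A B x0 z0 a c * r = 0.
  by exists (- den0 M A x0 z0 / den1 M A B x0 z0 a c); field.
have D_r : M * (x0 + a * r) * (z0 + c * r) = (A + B * r) * ((x0 + a * r) + (z0 + c * r)).
  apply/subr0_eq; rewrite -den_r.
  transitivity (den0 M A x0 z0 + den1 M A B x0 z0 a c * r + den2 M B a c * r ^+ 2).
    by rewrite /den0 /den1 /den2; ring.
  by rewrite den2_0 mul0r addr0.
have := congr1 (horner^~ r) E.
rewrite /lin /quad !(hornerD, hornerN, hornerM, hornerCM, hornerC, hornerX, horner_exp).
rewrite D_r subrr mulr0 => /esym NXZ_r.
have [[N_r X_r] | [N_r Z_r] | [X_r Z_r]] := two_of_three_eq0 M_neq0 D_r NXZ_r.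
- by apply: Or31; rewrite (common_root_cross N_r X_r).
- by apply: Or32; rewrite (common_root_cross N_r Z_r).
- by apply: Or33; rewrite (common_root_cross X_r Z_r).
Qed.

End LinearDenominator.

Section ExplicitSolutions.
Variables (F : numFieldType) (M A B x0 y0 z0 : F).
Hypotheses (A_gt0 : 0 < A) (B_gt0 : 0 < B).
Hypotheses (x0_gt0 : 0 < x0) (y0_gt0 : 0 < y0) (z0_gt0 : 0 < z0).
Hypothesis M_div_A : M / A = x0^-1 + y0^-1 + z0^-1.

Let A_neq0 : A != 0 := lt0r_neq0 A_gt0.
Let B_neq0 : B != 0 := lt0r_neq0 B_gt0.
Let x0_neq0 : x0 != 0 := lt0r_neq0 x0_gt0.
Let y0_neq0 : y0 != 0 := lt0r_neq0 y0_gt0.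
Let z0_neq0 : z0 != 0 := lt0r_neq0 z0_gt0.
Let y0z0_neq0 : y0 + z0 != 0 := lt0r_neq0 (addr_gt0 y0_gt0 z0_gt0).

Let M_eq : M = A * (x0^-1 + y0^-1 + z0^-1).
Proof. by rewrite -M_div_A mulrC (divfK A_neq0). Qed.

Let M_gt0 : 0 < M.
Proof. by rewrite M_eq mulr_gt0 // !addr_gt0 // invr_gt0. Qed.

Let M_neq0 : M != 0 := lt0r_neq0 M_gt0.

(* The numerator to which [field] normalises [x0^-1 + y0^-1 + z0^-1]. *)
Let sum_inv_num_neq0 : (y0 + x0) * z0 + x0 * y0 != 0.
Proof. by rewrite lt0r_neq0 // addr_gt0 // mulr_gt0 // addr_gt0. Qed.

Let nz :=
  (A_neq0, M_neq0, x0_neq0, y0_neq0, z0_neq0, y0z0_neq0, sum_inv_num_neq0).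

Lemma den0E : den0 M A x0 z0 = A * x0 * z0 / y0.
Proof. by rewrite /den0 M_eq; field; rewrite ?nz. Qed.

Lemma den0_neq0 : den0 M A x0 z0 != 0.
Proof. by rewrite den0E !mulf_neq0 // invr_eq0. Qed.

Lemma plus_coefs (a b c d : F) : a != 0 -> c != 0 -> d != 0 ->
  coef_eqs M A B x0 y0 z0 a b c d -> A * a = B * x0 ->
  (a, b, c, d) = (x0 * (B / A), y0 * (B / A) * (1 + y0 / (y0 + z0)),
                  B / A * (y0 * z0 / (y0 + z0)), (y0 * (B / A)) ^+ 2 / (y0 + z0)).
Proof.
move=> a_neq0 c_neq0 d_neq0 eqs Aa.
have [den2_0 den1_neq0 E3] := den_linear B_neq0 a_neq0 c_neq0 d_neq0 eqs.
have [_ E1 _ _ _] := eqs.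
have ha : a = x0 * (B / A) by apply: (mulfI A_neq0); rewrite Aa; field; rewrite ?nz.
have hc : c = B / A * (y0 * z0 / (y0 + z0)).
  have k_eq : M * a - B = B * x0 * (y0 + z0) / (y0 * z0).
    by rewrite ha M_eq; field; rewrite ?nz.
  have k_neq0 : M * a - B != 0 by rewrite k_eq !mulf_neq0 // invr_eq0 mulf_neq0.
  have : c * (M * a - B) - B * a = den2 M B a c by rewrite /den2; ring.
  rewrite den2_0 => /subr0_eq/(canRL (mulfK k_neq0)) ->.
  by rewrite k_eq ha; field; rewrite ?nz.
have hd : d = (y0 * (B / A)) ^+ 2 / (y0 + z0).
  apply: (mulIf den1_neq0); rewrite E3.
  by rewrite ha hc /den1 M_eq; field; rewrite ?nz.
have hb : b = y0 * (B / A) * (1 + y0 / (y0 + z0)).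
  apply: (mulIf den0_neq0); apply: (addrI (y0 * den1 M A B x0 z0 a c)); rewrite E1.
  by rewrite den0E ha hc /den1 M_eq; field; rewrite ?nz.
by rewrite -ha -hb -hc -hd.
Qed.

Lemma minus_coefs (a b c d : F) : a != 0 -> c != 0 -> d != 0 ->
  coef_eqs M A B x0 y0 z0 a b c d -> x0 * c = a * z0 ->
  (a, b, c, d) = (B / M * ((x0 + z0) / z0), 2 * y0 * B / A - B / M,
                  B / M * ((x0 + z0) / x0), B / A * (y0 * B / A - B / M)).
Proof.
move=> a_neq0 c_neq0 d_neq0 eqs xc.
have [den2_0 den1_neq0 E3] := den_linear B_neq0 a_neq0 c_neq0 d_neq0 eqs.
have [_ E1 _ _ _] := eqs.
have hc' : c = a * z0 / x0 by rewrite -xc; field; rewrite ?nz.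
have ha : a = B / M * ((x0 + z0) / z0).
  have : a * (M * z0 * a - B * (x0 + z0)) = x0 * den2 M B a c.
    by rewrite /den2 hc'; field; rewrite ?nz.
  rewrite den2_0 mulr0 => /eqP; rewrite mulf_eq0 (negbTE a_neq0) subr_eq0 => /eqP E.
  by apply: (mulfI (mulf_neq0 M_neq0 z0_neq0)); rewrite E; field; rewrite ?nz.
have hc : c = B / M * ((x0 + z0) / x0) by rewrite hc' ha; field; rewrite ?nz.
have hd : d = B / A * (y0 * B / A - B / M).
  apply: (mulIf den1_neq0); rewrite E3.
  by rewrite ha hc /den1 M_eq; field; rewrite ?nz.
have hb : b = 2 * y0 * B / A - B / M.
  apply: (mulIf den0_neq0); apply: (addrI (y0 * den1 M A B x0 z0 a c)); rewrite E1.
  by rewrite den0E ha hc /den1 M_eq; field; rewrite ?nz.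
by rewrite -ha -hb -hc -hd.
Qed.

Lemma plus_coef_eqs : coef_eqs M A B x0 y0 z0
  (x0 * (B / A)) (y0 * (B / A) * (1 + y0 / (y0 + z0)))
  (B / A * (y0 * z0 / (y0 + z0))) ((y0 * (B / A)) ^+ 2 / (y0 + z0)).
Proof. by rewrite /coef_eqs den0E /den1 /den2 M_eq; split; field; rewrite ?nz. Qed.

Lemma minus_coef_eqs : coef_eqs M A B x0 y0 z0
  (B / M * ((x0 + z0) / z0)) (2 * y0 * B / A - B / M)
  (B / M * ((x0 + z0) / x0)) (B / A * (y0 * B / A - B / M)).
Proof. by rewrite /coef_eqs den0E /den1 /den2 M_eq; split; field; rewrite ?nz. Qed.

Lemma minus_lead_coef_gt0 : 0 < B / A * (y0 * B / A - B / M).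
Proof.
have -> : y0 * B / A - B / M = B * y0 * (x0^-1 + z0^-1) / M.
  by rewrite M_eq; field; rewrite ?nz.
by rewrite !(mulr_gt0, divr_gt0, addr_gt0, invr_gt0).
Qed.

End ExplicitSolutions.

Lemma is_solution_coefP {m n0 n1 : nat} {x0 y0 z0 a b c d : rat} :
  (0 < n1)%N -> a != 0 -> c != 0 -> d != 0 ->
  is_solution m n0 n1 x0 y0 z0 (lin x0 a) (quad y0 b d) (lin z0 c) <->
  coef_eqs m%:R n0%:R n1%:R x0 y0 z0 a b c d.
Proof.
move=> n1_gt0 a_neq0 c_neq0 d_neq0.
have lin_neq0 (p0 p1 : rat) : p1 != 0 -> lin p0 p1 != 0.
  by move/(size_lin p0); rewrite -size_poly_eq0 => ->.
have quad_neq0 : quad y0 b d != 0 by rewrite -size_poly_eq0 size_quad.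
have n1_neq0 : n1%:R != 0 :> rat by rewrite pnatr_eq0 -lt0n.
rewrite -cleared_eq_coefP /is_solution !size_lin // size_quad // !horner_lin0 horner_quad0.
have -> : (m%:R : ratfun) = (m%:R : rat)%:P%:F by rewrite !rmorph_nat.
rewrite -[Defs.npoly n0 n1]/(lin n0%:R n1%:R) tofrac_div_eq_sum_inv3 ?lin_neq0 //.
by split=> [[_ [_ E]] | E].
Qed.

Lemma is_solution_lin (m n0 n1 : nat) (x0 y0 z0 : rat) (x y z : {poly rat}) :
  is_solution m n0 n1 x0 y0 z0 x y z ->
  exists a b c d, [/\ a != 0, c != 0, d != 0 &
    (x, y, z) = (lin x0 a, quad y0 b d, lin z0 c)].
Proof.
case=> [[/size2_lin[a a_neq0 ->] /size3_quad[b [d d_neq0 ->]] /size2_lin[c c_neq0 ->]]].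
by rewrite !horner_lin0 horner_quad0 => -[[-> -> ->] _]; exists a, b, c, d.
Qed.

Lemma is_solution_sym (m n0 n1 : nat) (x0 y0 z0 : rat) (x y z : {poly rat}) :
  is_solution m n0 n1 x0 y0 z0 x y z -> is_solution m n0 n1 z0 y0 x0 z y x.
Proof. by case=> [[sx sy sz] [[hx hy hz] E]]; split; [|split]; rewrite // E; ring. Qed.

Section RationalSolutions.
Variables (m n0 n1 : nat) (x0 y0 z0 : rat).
Hypotheses (m_gt0 : (0 < m)%N) (n0_gt0 : (0 < n0)%N) (n1_gt0 : (0 < n1)%N).
Hypotheses (x0_gt0 : 0 < x0) (y0_gt0 : 0 < y0) (z0_gt0 : 0 < z0).
Hypothesis m_div_n0 : m%:R / n0%:R = x0^-1 + y0^-1 + z0^-1.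

Let A_gt0 : 0 < n0%:R :> rat. Proof. by rewrite ltr0n. Qed.
Let B_gt0 : 0 < n1%:R :> rat. Proof. by rewrite ltr0n. Qed.

Lemma plus_is_solution :
  is_solution m n0 n1 x0 y0 z0 (xplus n0 n1 x0) (yplus n0 n1 y0 z0) (zplus n0 n1 y0 z0).
Proof.
apply/is_solution_coefP => //; last exact: plus_coef_eqs.
all: apply: lt0r_neq0.
all: by do ![apply: mulr_gt0 | rewrite invr_gt0 | apply: addr_gt0 | apply: exprn_gt0].
Qed.

Lemma minus_is_solution :
  is_solution m n0 n1 x0 y0 z0 (xminus m n1 x0 z0) (yminus m n0 n1 y0) (zminus m n1 x0 z0).
Proof.
have M_gt0 : 0 < m%:R :> rat by rewrite ltr0n.
apply/is_solution_coefP => //; last exact: minus_coef_eqs.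
- by apply: lt0r_neq0; do ![apply: mulr_gt0 | rewrite invr_gt0 | apply: addr_gt0].
- by apply: lt0r_neq0; do ![apply: mulr_gt0 | rewrite invr_gt0 | apply: addr_gt0].
- exact/lt0r_neq0/(minus_lead_coef_gt0 A_gt0 B_gt0 x0_gt0 y0_gt0 z0_gt0 m_div_n0).
Qed.

End RationalSolutions.

Theorem lemma6 (m n0 n1 : nat) (x0 y0 z0 : rat) :
  (0 < m)%N -> (0 < n0)%N -> (0 < n1)%N ->
  0 < x0 -> 0 < y0 -> 0 < z0 ->
  m%:R / n0%:R = x0^-1 + y0^-1 + z0^-1 ->
  forall x y z : {poly rat},
    is_solution m n0 n1 x0 y0 z0 x y z <->
    [\/ (x, y, z) = (xplus n0 n1 x0, yplus n0 n1 y0 z0, zplus n0 n1 y0 z0),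
        (x, y, z) = (zplus n0 n1 y0 x0, yplus n0 n1 y0 x0, xplus n0 n1 z0)
      | (x, y, z) = (xminus m n1 x0 z0, yminus m n0 n1 y0, zminus m n1 x0 z0)].
Proof.
move=> m_gt0 n0_gt0 n1_gt0 x0_gt0 y0_gt0 z0_gt0 hM x y z.
have hM_sym : m%:R / n0%:R = z0^-1 + y0^-1 + x0^-1.
  by rewrite hM addrC [x0^-1 + _]addrC addrA.
split=> [sol | ]; last first.
  case=> [[-> -> ->] | [-> -> ->] | [-> -> ->]].
  - exact: plus_is_solution.
  - exact/is_solution_sym/plus_is_solution.
  - exact: minus_is_solution.
have [A_gt0 B_gt0] : 0 < n0%:R :> rat /\ 0 < n1%:R :> rat by rewrite !ltr0n.
have M_neq0 : m%:R != 0 :> rat by rewrite pnatr_eq0 -lt0n.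
have [a [b [c [d [a_neq0 c_neq0 d_neq0 [xE yE zE]]]]]] := is_solution_lin sol.
subst x y z.
have eqs := (is_solution_coefP n1_gt0 a_neq0 c_neq0 d_neq0).1 sol.
have eqs_sym := (is_solution_coefP n1_gt0 c_neq0 a_neq0 d_neq0).1 (is_solution_sym sol).
case: (shared_root M_neq0 (lt0r_neq0 B_gt0) a_neq0 c_neq0 d_neq0 eqs) => [Aa | Ac | xc].
- have := plus_coefs A_gt0 B_gt0 x0_gt0 y0_gt0 z0_gt0 hM a_neq0 c_neq0 d_neq0 eqs Aa.
  by case=> -> -> -> ->; apply: Or31.
- have := plus_coefs A_gt0 B_gt0 z0_gt0 y0_gt0 x0_gt0 hM_sym c_neq0 a_neq0 d_neq0 eqs_sym Ac.
  by case=> -> -> -> ->; apply: Or32.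
- have := minus_coefs A_gt0 B_gt0 x0_gt0 y0_gt0 z0_gt0 hM a_neq0 c_neq0 d_neq0 eqs xc.
  by case=> -> -> -> ->; apply: Or33.
Qed.
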